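(* Let $\mathbb{P}$ be a class of closed formulas, and let $P$ be a proof in $\mathbf{FBI}^{\mathbb{P}}$ of a safety problem $\Pi$. Then $\operatorname{Inv}^\rightleftharpoons(P)$ is a safe inductive invariant of $\Pi$, and if $P$ contains $n\in\mathbb{N}$ instances of the rule (Ind), then $\operatorname{Inv}^\rightleftharpoons(P)$ is a Boolean combination of $n$ predicates from $\mathbb{P}$.
   Context: A first-order vocabulary $\Sigma$ consists of constant, function and relation symbols; $\Sigma'=\{a' : a\in\Sigma\}$ is a disjoint copy, and for a formula $\varphi$ over $\Sigma$, $\varphi'$ denotes $\varphi$ with every symbol replaced by its primed copy. A safety problem is a triple $(\iota,\tau,\beta)$, where $\iota,\beta$ are closed formulas over $\Sigma$ and $\tau$ is a closed formula over $\Sigma\uplus\Sigma'$. $A\Rightarrow B$ means the implication $A\to B$ is valid. $\tau^{-1}$ denotes $\tau$ with each symbol of $\Sigma$ and its primed counterpart swapped. A closed formula $\varphi$ over $\Sigma$ is a safe inductive invariant of $(\iota,\tau,\beta)$ if $\iota\Rightarrow\varphi$, $\varphi\wedge\tau\Rightarrow\varphi'$ and $\varphi\Rightarrow\neg\beta$. Proofs: a proof of $\Pi$ in a system is a finite tree whose nodes are safety problems, whose root is $\Pi$, and in which each node together with its children is an instance of one of the system's rules, with side conditions valid. $\mathbf{FBI}$ has the rules ($\varphi$ ranges over closed formulas over $\Sigma$): (Ind): no premises; conclusion $(\iota,\tau,\neg\varphi)$; side conditions $\iota\Rightarrow\varphi$ and $\varphi\wedge\tau\Rightarrow\varphi'$.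 (Cons): premise $(\iota,\tau,\neg\varphi)$; conclusion $(\iota,\tau,\beta)$; side condition $\varphi\Rightarrow\neg\beta$. (Inc): premises $(\iota,\tau,\neg\varphi)$ and $(\iota\wedge\varphi,\ \tau\wedge\varphi\wedge\varphi',\ \beta\wedge\varphi)$; conclusion $(\iota,\tau,\beta)$. (Rev): premise $(\beta,\tau^{-1},\iota)$; conclusion $(\iota,\tau,\beta)$. $\mathbf{FBI}^{\mathbb{P}}$ is $\mathbf{FBI}$ with applications of (Ind) restricted to $\varphi\in\mathbb{P}$. $\operatorname{Inv}^\rightleftharpoons(P)$ is defined by induction on $P$: if the root is the conclusion $(\iota,\tau,\neg\varphi)$ of (Ind), it is $\varphi$; if the root is the conclusion of (Cons) with premise proof $\tilde P$, it is $\operatorname{Inv}^\rightleftharpoons(\tilde P)$; if the root is the conclusion of (Inc) with premise proofs $P_1,P_2$, it is $\operatorname{Inv}^\rightleftharpoons(P_1)\wedge\operatorname{Inv}^\rightleftharpoons(P_2)$; if the root is the conclusion of (Rev) with premise proof $\tilde P$, it is $\neg\operatorname{Inv}^\rightleftharpoons(\tilde P)$. *)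

From Stdlib Require Import List.
Import ListNotations.
Set Implicit Arguments.

(* Function symbols (constants = 0-ary function symbols) and relation symbols,
   each with an arity. *)
Record vocab := {
  fsym : Type;
  rsym : Type;
  farity : fsym -> nat;
  rarity : rsym -> nat
}.

(* Sigma ⊎ Sigma' : inl = unprimed symbol a, inr = primed copy a'. *)
Definition dup (S : vocab) : vocab := {|
  fsym := (fsym S + fsym S)%type;
  rsym := (rsym S + rsym S)%type;
  farity := fun f => match f with inl g => farity S g | inr g => farity S g end;
  rarity := fun r => match r with inl g => rarity S g | inr g => rarity S g end
|}.

Inductive term (F : Type) : Type :=
| Var : nat -> term F
| App : F -> list (term F) -> term F.
Arguments Var {F} _.

Inductive form (F R : Type) : Type :=
| FTrue : form F R
| FFalse : form F R
| FEq : term F -> term F -> form F R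
| FRel : R -> list (term F) -> form F R
| FNot : form F R -> form F R
| FAnd : form F R -> form F R -> form F R
| FOr : form F R -> form F R -> form F R
| FImp : form F R -> form F R -> form F R
| FAll : nat -> form F R -> form F R
| FEx : nat -> form F R -> form F R.
Arguments FTrue {F R}.
Arguments FFalse {F R}.
Arguments FEq {F R} _ _.
Arguments FRel {F R} _ _.
Arguments FNot {F R} _.
Arguments FAnd {F R} _ _.
Arguments FOr {F R} _ _.
Arguments FImp {F R} _ _.
Arguments FAll {F R} _ _.
Arguments FEx {F R} _ _.
Arguments App {F} _ _.

Definition fm (S : vocab) := form (fsym S) (rsym S).

Fixpoint twf (S : vocab) (t : term (fsym S)) : Prop :=
  match t with
  | Var _ => True
  | App f ts => length ts = farity S f /\
      (fix go (l : list (term (fsym S))) : Prop :=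
         match l with nil => True | t :: l => @twf S t /\ go l end) ts
  end.

Fixpoint twf_list (S : vocab) (l : list (term (fsym S))) : Prop :=
  match l with nil => True | t :: l => @twf S t /\ @twf_list S l end.

Fixpoint fwf (S : vocab) (phi : fm S) : Prop :=
  match phi with
  | FTrue | FFalse => True
  | FEq t1 t2 => @twf S t1 /\ @twf S t2
  | FRel r ts => length ts = rarity S r /\ @twf_list S ts
  | FNot a => @fwf S a
  | FAnd a b | FOr a b | FImp a b => @fwf S a /\ @fwf S b
  | FAll _ a | FEx _ a => @fwf S a
  end.

Fixpoint tfree (F : Type) (n : nat) (t : term F) : Prop :=
  match t with
  | Var m => n = m
  | App _ ts =>
      (fix go (l : list (term F)) : Prop :=
         match l with nil => False | t :: l => tfree n t \/ go l end) ts
  end.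

Fixpoint tfree_list (F : Type) (n : nat) (l : list (term F)) : Prop :=
  match l with nil => False | t :: l => tfree n t \/ tfree_list n l end.

Fixpoint ffree (F R : Type) (n : nat) (phi : form F R) : Prop :=
  match phi with
  | FTrue | FFalse => False
  | FEq t1 t2 => tfree n t1 \/ tfree n t2
  | FRel _ ts => tfree_list n ts
  | FNot a => ffree n a
  | FAnd a b | FOr a b | FImp a b => ffree n a \/ ffree n b
  | FAll m a | FEx m a => n <> m /\ ffree n a
  end.

Definition closed_over (S : vocab) (phi : fm S) : Prop :=
  @fwf S phi /\ forall n, ~ ffree n phi.
Arguments closed_over S phi : clear implicits.

Record structure (S : vocab) := {
  dom : Type;
  dom_inh : dom;
  fint : fsym S -> list dom -> dom;
  rint : rsym S -> list dom -> Prop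
}.

Fixpoint teval (S : vocab) (M : structure S) (env : nat -> dom M)
  (t : term (fsym S)) : dom M :=
  match t with
  | Var n => env n
  | App f ts => fint M f (map (teval M env) ts)
  end.

Definition upd (D : Type) (env : nat -> D) (n : nat) (d : D) : nat -> D :=
  fun m => if Nat.eqb m n then d else env m.

Fixpoint sat (S : vocab) (M : structure S) (env : nat -> dom M) (phi : fm S)
  : Prop :=
  match phi with
  | FTrue => True
  | FFalse => False
  | FEq t1 t2 => teval M env t1 = teval M env t2
  | FRel r ts => rint M r (map (teval M env) ts)
  | FNot a => ~ sat M env a
  | FAnd a b => sat M env a /\ sat M env b
  | FOr a b => sat M env a \/ sat M env b
  | FImp a b => sat M env a -> sat M env b
  | FAll n a => forall d : dom M, sat M (upd env n d) a
  | FEx n a => exists d : dom M, sat M (upd env n d) a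
  end.

Definition valid (S : vocab) (phi : fm S) : Prop :=
  forall (M : structure S) (env : nat -> dom M), sat M env phi.
Arguments valid S phi : clear implicits.

Definition entails (S : vocab) (A B : fm S) : Prop := valid S (FImp A B).
Arguments entails S A B : clear implicits.

Fixpoint trename (F F' : Type) (g : F -> F') (t : term F) : term F' :=
  match t with
  | Var n => Var n
  | App f ts => App (g f) (map (trename g) ts)
  end.

Fixpoint frename (F F' R R' : Type) (g : F -> F') (h : R -> R')
  (phi : form F R) : form F' R' :=
  match phi with
  | FTrue => FTrue
  | FFalse => FFalse
  | FEq t1 t2 => FEq (trename g t1) (trename g t2)
  | FRel r ts => FRel (h r) (map (trename g) ts)
  | FNot a => FNot (frename g h a)
  | FAnd a b => FAnd (frename g h a) (frename g h b)
  | FOr a b => FOr (frename g h a) (frename g h b)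
  | FImp a b => FImp (frename g h a) (frename g h b)
  | FAll n a => FAll n (frename g h a)
  | FEx n a => FEx n (frename g h a)
  end.

Definition swap_sum (A : Type) (x : A + A) : A + A :=
  match x with inl a => inr a | inr a => inl a end.

Definition unprimed (S : vocab) (phi : fm S) : fm (dup S) :=
  frename (@inl (fsym S) (fsym S)) (@inl (rsym S) (rsym S)) phi.
Definition primed (S : vocab) (phi : fm S) : fm (dup S) :=
  frename (@inr (fsym S) (fsym S)) (@inr (rsym S) (rsym S)) phi.
Definition tinv (S : vocab) (tau : fm (dup S)) : fm (dup S) :=
  frename (@swap_sum (fsym S)) (@swap_sum (rsym S)) tau.

Record problem (S : vocab) := mkProblem {
  p_init : fm S;
  p_trans : fm (dup S);
  p_bad : fm S
}.
Arguments mkProblem {S} _ _ _.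

Definition safety_problem (S : vocab) (Pi : problem S) : Prop :=
  closed_over S (p_init Pi) /\ closed_over (dup S) (p_trans Pi) /\
  closed_over S (p_bad Pi).
Arguments safety_problem S Pi : clear implicits.

Definition safe_inductive_invariant (S : vocab) (Pi : problem S) (phi : fm S)
  : Prop :=
  closed_over S phi /\
  entails S (p_init Pi) phi /\
  entails (dup S) (FAnd (unprimed phi) (p_trans Pi)) (primed phi) /\
  entails S phi (FNot (p_bad Pi)).
Arguments safe_inductive_invariant S Pi phi : clear implicits.

Inductive fbi (S : vocab) (PP : fm S -> Prop) : problem S -> Type :=
| RInd (iota : fm S) (tau : fm (dup S)) (phi : fm S) :
    closed_over S phi -> PP phi ->
    entails S iota phi ->
    entails (dup S) (FAnd (unprimed phi) tau) (primed phi) ->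
    fbi PP (mkProblem iota tau (FNot phi))
| RCons (iota : fm S) (tau : fm (dup S)) (beta phi : fm S) :
    closed_over S phi ->
    entails S phi (FNot beta) ->
    fbi PP (mkProblem iota tau (FNot phi)) ->
    fbi PP (mkProblem iota tau beta)
| RInc (iota : fm S) (tau : fm (dup S)) (beta phi : fm S) :
    closed_over S phi ->
    fbi PP (mkProblem iota tau (FNot phi)) ->
    fbi PP (mkProblem (FAnd iota phi)
                      (FAnd tau (FAnd (unprimed phi) (primed phi)))
                      (FAnd beta phi)) ->
    fbi PP (mkProblem iota tau beta)
| RRev (iota : fm S) (tau : fm (dup S)) (beta : fm S) :
    fbi PP (mkProblem beta (tinv tau) iota) ->
    fbi PP (mkProblem iota tau beta).

Fixpoint Inv (S : vocab) (PP : fm S -> Prop) (Pi : problem S)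
  (P : fbi PP Pi) {struct P} : fm S :=
  match P with
  | @RInd _ _ _ _ phi _ _ _ _ => phi
  | @RCons _ _ _ _ _ _ _ _ P1 => Inv P1
  | @RInc _ _ _ _ _ _ _ P1 P2 => FAnd (Inv P1) (Inv P2)
  | @RRev _ _ _ _ _ P1 => FNot (Inv P1)
  end.

Fixpoint count_ind (S : vocab) (PP : fm S -> Prop) (Pi : problem S)
  (P : fbi PP Pi) {struct P} : nat :=
  match P with
  | @RInd _ _ _ _ _ _ _ _ _ => 1
  | @RCons _ _ _ _ _ _ _ _ P1 => count_ind P1
  | @RInc _ _ _ _ _ _ _ P1 P2 => count_ind P1 + count_ind P2
  | @RRev _ _ _ _ _ P1 => count_ind P1
  end.

Inductive boolcomb (F R : Type) (ps : list (form F R)) : form F R -> Prop :=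
| bc_atom psi : In psi ps -> boolcomb ps psi
| bc_true : boolcomb ps FTrue
| bc_false : boolcomb ps FFalse
| bc_not a : boolcomb ps a -> boolcomb ps (FNot a)
| bc_and a b : boolcomb ps a -> boolcomb ps b -> boolcomb ps (FAnd a b)
| bc_or a b : boolcomb ps a -> boolcomb ps b -> boolcomb ps (FOr a b)
| bc_imp a b : boolcomb ps a -> boolcomb ps b -> boolcomb ps (FImp a b).

(* Induction on the proof tree: each rule turns safe inductive invariants of
   its premises into one of its conclusion.  (Cons) keeps the invariant since
   phi => ~beta; (Inc) may conjoin the two invariants because the first one
   already implies phi, so it confines the system to phi; (Rev) negates the
   invariant, since the complement of an inductive invariant of the reversed
   system (beta, tau^-1, iota) is inductive for (iota, tau, beta).  The
   invariant is thus built from the formulas introduced by (Ind) using only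
   ~ and /\, one formula per instance of (Ind). *)
From Stdlib Require Import List Classical.
Import ListNotations.

Lemma term_nested_ind (F : Type) (Q : term F -> Prop) :
  (forall n, Q (Var n)) ->
  (forall f ts, Forall Q ts -> Q (App f ts)) ->
  forall t, Q t.
Proof.
  intros HVar HApp.
  fix IH 1; intros [n | f ts]; [apply HVar | apply HApp].
  induction ts as [| t ts IHts]; constructor; [apply IH | exact IHts].
Qed.

Lemma trename_involutive {F : Type} {g : F -> F} :
  (forall x, g (g x) = x) -> forall t : term F, trename g (trename g t) = t.
Proof.
  intros Hg; apply term_nested_ind; [reflexivity |].
  intros f ts Hts; simpl; rewrite Hg, map_map.
  f_equal; rewrite <- map_id; exact (map_ext_Forall _ _ Hts).
Qed.

Lemma frename_involutive (F R : Type) (g : F -> F) (h : R -> R) :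
  (forall x, g (g x) = x) -> (forall r, h (h r) = r) ->
  forall phi : form F R, frename g h (frename g h phi) = phi.
Proof.
  intros Hg Hh phi; induction phi; simpl; try congruence.
  - rewrite !trename_involutive by exact Hg; reflexivity.
  - rewrite Hh, map_map, (map_ext _ _ (trename_involutive Hg)), map_id.
    reflexivity.
Qed.

Lemma swap_sum_involutive (A : Type) (x : A + A) : swap_sum (swap_sum x) = x.
Proof. destruct x; reflexivity. Qed.

Lemma tinv_involutive (S : vocab) (tau : fm (dup S)) : tinv (tinv tau) = tau.
Proof. apply frename_involutive; apply swap_sum_involutive. Qed.

Definition reduct (S1 S2 : vocab) (g : fsym S1 -> fsym S2)
  (h : rsym S1 -> rsym S2) (M : structure S2) : structure S1 :=
  {| dom := dom M; dom_inh := dom_inh M;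
     fint := fun f => fint M (g f); rint := fun r => rint M (h r) |}.
Arguments reduct {S1 S2} g h M.

Section Reduct.
Variables (S1 S2 : vocab) (g : fsym S1 -> fsym S2) (h : rsym S1 -> rsym S2)
  (M : structure S2).

Lemma teval_reduct (env : nat -> dom M) (t : term (fsym S1)) :
  teval (reduct g h M) env t = teval M env (trename g t).
Proof.
  induction t as [n | f ts Hts] using term_nested_ind; simpl; [reflexivity |].
  rewrite map_map; f_equal; exact (map_ext_Forall _ _ Hts).
Qed.

Lemma sat_reduct (phi : fm S1) (env : nat -> dom M) :
  sat (reduct g h M) env phi <-> sat M env (frename g h phi).
Proof.
  revert env; induction phi; intros env; simpl;
    try (rewrite ?IHphi, ?IHphi1, ?IHphi2; tauto).
  - rewrite !teval_reduct; tauto.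
  - rewrite map_map; erewrite map_ext by apply teval_reduct; tauto.
  - split; intros H d; apply IHphi, H.
  - split; intros [d H]; exists d; apply IHphi, H.
Qed.

End Reduct.

Section Rules.
Variable S : vocab.

Definition unprimed_part (M : structure (dup S)) : structure S :=
  reduct (S1 := S) (S2 := dup S) inl inl M.
Definition primed_part (M : structure (dup S)) : structure S :=
  reduct (S1 := S) (S2 := dup S) inr inr M.
Definition swap_primes (M : structure (dup S)) : structure (dup S) :=
  reduct (S1 := dup S) (S2 := dup S) (@swap_sum _) (@swap_sum _) M.

Lemma sat_unprimed (M : structure (dup S)) env (phi : fm S) :
  sat M env (unprimed phi) <-> sat (unprimed_part M) env phi.
Proof. symmetry; apply sat_reduct. Qed.

Lemma sat_primed (M : structure (dup S)) env (phi : fm S) :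
  sat M env (primed phi) <-> sat (primed_part M) env phi.
Proof. symmetry; apply sat_reduct. Qed.

Lemma sat_tinv (M : structure (dup S)) env (tau : fm (dup S)) :
  sat (swap_primes M) env (tinv tau) <-> sat M env tau.
Proof.
  unfold swap_primes; rewrite sat_reduct.
  change (sat M env (tinv (tinv tau)) <-> sat M env tau).
  rewrite tinv_involutive; reflexivity.
Qed.

Lemma closed_over_FAnd (a b : fm S) :
  closed_over S a -> closed_over S b -> closed_over S (FAnd a b).
Proof.
  intros [Ha Hfa] [Hb Hfb]; split; [split; assumption |].
  intros n [Hn | Hn]; [exact (Hfa n Hn) | exact (Hfb n Hn)].
Qed.

Variables (iota : fm S) (tau : fm (dup S)).

Lemma invariant_Ind (phi : fm S) :
  closed_over S phi -> entails S iota phi ->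
  entails (dup S) (FAnd (unprimed phi) tau) (primed phi) ->
  safe_inductive_invariant S (mkProblem iota tau (FNot phi)) phi.
Proof.
  intros Hc Hinit Hstep; refine (conj Hc (conj Hinit (conj Hstep _))).
  intros M env Hphi Hnphi; exact (Hnphi Hphi).
Qed.

Lemma invariant_Cons (beta phi I : fm S) :
  entails S phi (FNot beta) ->
  safe_inductive_invariant S (mkProblem iota tau (FNot phi)) I ->
  safe_inductive_invariant S (mkProblem iota tau beta) I.
Proof.
  intros Hphi [Hc [Hinit [Hstep Hsafe]]].
  refine (conj Hc (conj Hinit (conj Hstep _))).
  intros M env HI Hbeta; apply (Hsafe M env HI).
  intros Hphi'; exact (Hphi M env Hphi' Hbeta).
Qed.

Lemma invariant_Inc (beta phi I1 I2 : fm S) :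
  safe_inductive_invariant S (mkProblem iota tau (FNot phi)) I1 ->
  safe_inductive_invariant S
    (mkProblem (FAnd iota phi) (FAnd tau (FAnd (unprimed phi) (primed phi)))
       (FAnd beta phi)) I2 ->
  safe_inductive_invariant S (mkProblem iota tau beta) (FAnd I1 I2).
Proof.
  intros [Hc1 [Hinit1 [Hstep1 Hsafe1]]] [Hc2 [Hinit2 [Hstep2 Hsafe2]]].
  (* classically, I1 => ~~phi means I1 => phi *)
  assert (HI1 : forall M env, sat M env I1 -> sat M env phi)
    by (intros M env H; apply NNPP, (Hsafe1 M env H)).
  split; [apply closed_over_FAnd; assumption | split; [| split]].
  - intros M env Hiota; pose proof (Hinit1 M env Hiota) as H1.
    split; [exact H1 |].
    apply Hinit2; split; [exact Hiota | exact (HI1 M env H1)].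
  - intros M env [[H1 H2] Htau].
    assert (H1' : sat M env (primed I1)) by (apply Hstep1; split; assumption).
    split; [exact H1' |].
    apply Hstep2; repeat split; try assumption.
    + apply sat_unprimed, HI1, sat_unprimed, H1.
    + apply sat_primed, HI1, sat_primed, H1'.
  - intros M env [H1 H2] Hbeta.
    exact (Hsafe2 M env H2 (conj Hbeta (HI1 M env H1))).
Qed.

Lemma invariant_Rev (beta I : fm S) :
  safe_inductive_invariant S (mkProblem beta (tinv tau) iota) I ->
  safe_inductive_invariant S (mkProblem iota tau beta) (FNot I).
Proof.
  intros [Hc [Hinit [Hstep Hsafe]]].
  split; [exact Hc | split; [| split]].
  - intros M env Hiota HI; exact (Hsafe M env HI Hiota).
  - (* in the structure with primed and unprimed symbols exchanged, a step of
       tau from a state outside I to a state in I is a step of tinv tau back *)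
    intros M env [HnI Htau] HI'.
    apply HnI, sat_unprimed.
    change (sat (primed_part (swap_primes M)) env I).
    apply sat_primed, Hstep; split.
    + apply sat_unprimed; change (sat (primed_part M) env I).
      apply sat_primed, HI'.
    + apply sat_tinv, Htau.
  - intros M env HnI Hbeta; apply HnI, Hinit, Hbeta.
Qed.

End Rules.

Lemma Inv_safe_inductive_invariant (S : vocab) (PP : fm S -> Prop)
  (Pi : problem S) (P : fbi PP Pi) :
  safe_inductive_invariant S Pi (Inv P).
Proof.
  induction P; simpl.
  - apply invariant_Ind; assumption.
  - eapply invariant_Cons; eassumption.
  - eapply invariant_Inc; eassumption.
  - apply invariant_Rev; assumption.
Qed.

Lemma boolcomb_incl (F R : Type) (ps qs : list (form F R)) (a : form F R) :
  incl ps qs -> boolcomb ps a -> boolcomb qs a.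
Proof.
  intros Hincl H; induction H;
    [apply bc_atom, Hincl | constructor ..]; assumption.
Qed.

Lemma Inv_boolcomb (S : vocab) (PP : fm S -> Prop) (Pi : problem S)
  (P : fbi PP Pi) :
  exists ps : list (fm S),
    length ps = count_ind P /\ Forall PP ps /\ boolcomb ps (Inv P).
Proof.
  induction P as [iota tau phi ? Hphi | | ? ? ? ? ? P1 IH1 P2 IH2 | ]; simpl.
  - exists [phi]; split; [reflexivity | split].
    + apply Forall_cons; [exact Hphi | apply Forall_nil].
    + apply bc_atom, in_eq.
  - assumption.
  - destruct IH1 as [ps1 [Hl1 [Hf1 Hb1]]], IH2 as [ps2 [Hl2 [Hf2 Hb2]]].
    exists (ps1 ++ ps2); split; [| split].
    + rewrite length_app, Hl1, Hl2; reflexivity.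
    + apply Forall_app; split; assumption.
    + apply bc_and; eapply boolcomb_incl; try eassumption;
        [apply incl_appl | apply incl_appr]; apply incl_refl.
  - destruct IHP as [ps [Hl [Hf Hb]]].
    exists ps; split; [exact Hl | split; [exact Hf | apply bc_not, Hb]].
Qed.

Theorem theorem4p13 (S : vocab) (PP : fm S -> Prop)
  (HPP : forall phi, PP phi -> closed_over S phi)
  (Pi : problem S) (HPi : safety_problem S Pi) (P : fbi PP Pi) :
  safe_inductive_invariant S Pi (Inv P) /\
  exists ps : list (fm S),
    length ps = count_ind P /\ Forall PP ps /\ boolcomb ps (Inv P).
Proof.
  (* closedness is already a side condition of (Ind), (Cons) and (Inc) *)
  split; [apply Inv_safe_inductive_invariant | apply Inv_boolcomb].
Qed.
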